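(* The diameter of the swap graph $\mathcal{G}_n$ is $\Omega\!\left(\frac{n}{\ln n}\right)$ as $n\to\infty$.
   Context: Sequences are finite sequences of pairwise distinct integers indexed from $1$. The Cartesian tree $C(x)$ of a sequence $x$ of length $n$ is empty if $n=0$; otherwise, if $x[i]$ is the minimum of $x$, it is the binary tree with root $i$, left subtree $C(x[1\ldots i-1])$ and right subtree $C(x[i+1\ldots n])$. $x\approx_{CT}y$ means $C(x)=C(y)$. For $1\le i\le n-1$, $\tau(x,i)$ is obtained from $x$ by exchanging $x[i]$ and $x[i+1]$. For sequences $x,y$ of length $n$, $x\overset{\tau}{\approx}_{CT}y$ means $x\approx_{CT}y$, or there is $i\in\{1,\ldots,n-1\}$ with $\tau(x,i)\approx_{CT}y$ or $\tau(y,i)\approx_{CT}x$. The swap graph $\mathcal{G}_n$ has as vertex set the set $\mathcal{C}_n$ of Cartesian trees with $n$ nodes (i.e. all binary trees with $n$ nodes), with an edge $\{C(x),C(y)\}$ whenever $x\overset{\tau}{\approx}_{CT}y$ (and $C(x)\neq C(y)$). *)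

From Stdlib Require Import ZArith List Reals.
Import ListNotations.

(* Unlabelled binary trees. The Cartesian tree of a sequence has its nodes
   labelled by indices, but those labels are exactly the in-order positions,
   so the shape determines the labelled tree. *)
Inductive btree : Type := Leaf | Node (l r : btree).

Fixpoint bsize (t : btree) : nat :=
  match t with Leaf => 0 | Node l r => S (bsize l + bsize r) end.

Fixpoint index_of (a : Z) (l : list Z) : nat :=
  match l with
  | [] => 0
  | b :: l' => if Z.eqb a b then 0 else S (index_of a l')
  end.

(* Cartesian tree, computed with fuel (fuel = length suffices). *)
Fixpoint ct_fuel (k : nat) (x : list Z) : btree :=
  match k with
  | O => Leaf
  | S k' =>
      match x with
      | [] => Leaf
      | h :: t =>
          let i := index_of (fold_left Z.min t h) x in
          Node (ct_fuel k' (firstn i x)) (ct_fuel k' (skipn (S i) x))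
      end
  end.

Definition cartesian (x : list Z) : btree := ct_fuel (length x) x.

Definition ct_equiv (x y : list Z) : Prop := cartesian x = cartesian y.

(* tau(x, i): exchange x[i] and x[i+1] (1-indexed), for 1 <= i <= n-1 *)
Definition tau (x : list Z) (i : nat) : list Z :=
  firstn (i - 1) x ++ nth i x 0%Z :: nth (i - 1) x 0%Z :: skipn (i + 1) x.

Definition swap_equiv (n : nat) (x y : list Z) : Prop :=
  ct_equiv x y \/
  exists i, (1 <= i <= n - 1)%nat /\ (ct_equiv (tau x i) y \/ ct_equiv (tau y i) x).

Definition valid_seq (n : nat) (x : list Z) : Prop := length x = n /\ NoDup x.

Definition swap_edge (n : nat) (t1 t2 : btree) : Prop :=
  t1 <> t2 /\
  exists x y, valid_seq n x /\ valid_seq n y /\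
    cartesian x = t1 /\ cartesian y = t2 /\ swap_equiv n x y.

Inductive walk (n : nat) : nat -> btree -> btree -> Prop :=
| walk0 t : walk n 0 t t
| walkS m t1 t2 t3 : swap_edge n t1 t2 -> walk n m t2 t3 -> walk n (S m) t1 t3.

(* diam(G_n) >= k : some two vertices (binary trees with n nodes) are at
   graph distance >= k (distance = +infinity if not connected). *)
Definition diam_ge (n : nat) (k : R) : Prop :=
  exists t1 t2, bsize t1 = n /\ bsize t2 = n /\
    forall m, walk n m t1 t2 -> (k <= INR m)%R.

From Stdlib Require Import Reals ZArith List Lia Lra Permutation Classical FinFun.
Import ListNotations.

(* A binary tree with n nodes is encoded by its previous-smaller-value array: the
   array of any sequence with that Cartesian tree, whose k-th entry is the nearest
   position to the left of k holding a smaller value.  Swapping the entries at j and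
   j+1 changes this array only through a few parameters: j, the two new entries at
   j and j+1, and a threshold, because the positions linked to j+1 carry decreasing
   values, so those the swap redirects to j form a final segment.  Hence every
   vertex of G_n has fewer than (n+1)^4 neighbours and the ball of radius d has at
   most (n+1)^(4d) vertices.  The 2^(n-1) path-shaped trees do not all fit in such a
   ball when d = n / (12 log2 n), so some tree is at distance > d from a fixed one. *)

Definition entry (x : list Z) (q : nat) : Z := nth q x 0%Z.

Fixpoint prev_smaller (f : nat -> Z) (v : Z) (k : nat) : option nat :=
  match k with
  | O => None
  | S k' => if (f k' <? v)%Z then Some k' else prev_smaller f v k'
  end.

Definition psv_at (f : nat -> Z) (k : nat) : option nat := prev_smaller f (f k) k.

Definition psv (x : list Z) : list (option nat) :=
  map (psv_at (entry x)) (seq 0 (length x)).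

Definition options (n : nat) : list (option nat) := None :: map Some (seq 0 n).

Lemma prev_smaller_ext f g v k :
  (forall q, q < k -> f q = g q) -> prev_smaller f v k = prev_smaller g v k.
Proof.
  induction k as [|k IH]; intros Hfg; simpl; [reflexivity|].
  rewrite Hfg by lia. rewrite IH by (intros; apply Hfg; lia). reflexivity.
Qed.

Lemma prev_smaller_Some f v k p : prev_smaller f v k = Some p ->
  p < k /\ (f p < v)%Z /\ forall q, p < q < k -> (v <= f q)%Z.
Proof.
  induction k as [|k IH]; simpl; intros H; [discriminate|].
  destruct (Z.ltb_spec (f k) v).
  - injection H as <-. repeat split; auto; intros; lia.
  - destruct (IH H) as (Hp & Hfp & Hge). repeat split; auto.
    intros q Hq. destruct (Nat.eq_dec q k) as [->|]; [lia | apply Hge; lia].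
Qed.

Lemma prev_smaller_None f v k :
  (forall q, q < k -> (v <= f q)%Z) -> prev_smaller f v k = None.
Proof.
  induction k as [|k IH]; simpl; intros H; [reflexivity|].
  destruct (Z.ltb_spec (f k) v); [specialize (H k); lia|].
  apply IH. intros; apply H; lia.
Qed.

Lemma prev_smaller_add f v a r : prev_smaller f v (a + r) =
  match prev_smaller (fun q => f (a + q)) v r with
  | Some q => Some (a + q)
  | None => prev_smaller f v a
  end.
Proof.
  induction r as [|r IH]; simpl.
  - rewrite Nat.add_0_r. reflexivity.
  - rewrite Nat.add_succ_r. simpl. destruct (Z.ltb (f (a + r)) v); auto.
Qed.

Lemma prev_smaller_in_options f v k n : k <= n -> In (prev_smaller f v k) (options n).
Proof.
  intros Hk. destruct (prev_smaller f v k) as [p|] eqn:E; [right | left; reflexivity].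
  apply prev_smaller_Some in E. apply in_map, in_seq. lia.
Qed.

Lemma psv_at_ext f g k : (forall q, q <= k -> f q = g q) -> psv_at f k = psv_at g k.
Proof.
  intros Hfg. unfold psv_at. rewrite Hfg by lia.
  apply prev_smaller_ext. intros; apply Hfg; lia.
Qed.

Lemma psv_length x : length (psv x) = length x.
Proof. unfold psv. rewrite length_map, length_seq. reflexivity. Qed.

Lemma nth_psv x k : k < length x -> nth k (psv x) None = psv_at (entry x) k.
Proof.
  intros Hk. unfold psv.
  rewrite (nth_indep _ None (psv_at (entry x) 0)) by (rewrite length_map, length_seq; exact Hk).
  rewrite map_nth, seq_nth by exact Hk. reflexivity.
Qed.

Lemma seq_offset a len : seq a len = map (Nat.add a) (seq 0 len).
Proof.
  revert a; induction len as [|len IH]; intros a; simpl; [reflexivity|].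
  rewrite Nat.add_0_r, IH, (IH 1), map_map. f_equal.
  apply map_ext. intros; lia.
Qed.

(** Links of the right part are shifted past the minimum at [a]; an entry with no
    smaller value to its left in the right part links to the minimum itself. *)
Definition lift_link (a : nat) (o : option nat) : option nat :=
  match o with Some q => Some (S a + q) | None => Some a end.

Lemma psv_app_min L m R :
  (forall z, In z L -> (m < z)%Z) -> (forall z, In z R -> (m < z)%Z) ->
  psv (L ++ m :: R) = psv L ++ None :: map (lift_link (length L)) (psv R).
Proof.
  intros HL HR. set (x := L ++ m :: R).
  assert (Eleft : forall k, k < length L -> entry x k = entry L k)
    by (intros; apply app_nth1; lia).
  assert (Emin : entry x (length L) = m)
    by (unfold entry, x; rewrite app_nth2, Nat.sub_diag by lia; reflexivity).
  assert (Eright : forall r, entry x (S (length L) + r) = entry R r).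
  { intros r. unfold entry, x. rewrite app_nth2 by lia.
    replace (S (length L) + r - length L) with (S r) by lia. reflexivity. }
  unfold psv at 1. replace (length x) with (length L + S (length R))
    by (unfold x; rewrite length_app; reflexivity).
  rewrite seq_app, map_app. simpl seq. simpl map. f_equal; [|f_equal].
  - apply map_ext_in. intros k Hk. apply in_seq in Hk.
    apply psv_at_ext. intros; apply Eleft; lia.
  - unfold psv_at. rewrite Emin. apply prev_smaller_None.
    intros q Hq. rewrite Eleft by exact Hq. apply Z.lt_le_incl, HL, nth_In, Hq.
  - unfold psv. rewrite seq_offset, !map_map. apply map_ext_in. intros r Hr.
    apply in_seq in Hr. unfold psv_at. rewrite Eright, prev_smaller_add.
    rewrite (prev_smaller_ext _ (entry R)) by (intros; apply Eright).
    destruct (prev_smaller (entry R) (entry R r) r); [reflexivity|].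
    cbn [prev_smaller]. rewrite Emin.
    assert (Hm : (m < entry R r)%Z) by (apply HR, nth_In; lia).
    destruct (Z.ltb_spec m (entry R r)); [reflexivity | lia].
Qed.

Fixpoint tree_psv (t : btree) : list (option nat) :=
  match t with
  | Leaf => []
  | Node l r => tree_psv l ++ None :: map (lift_link (bsize l)) (tree_psv r)
  end.

Lemma tree_psv_length t : length (tree_psv t) = bsize t.
Proof.
  induction t as [|l IHl r IHr]; simpl; [reflexivity|].
  rewrite length_app. simpl. rewrite length_map. lia.
Qed.

Lemma fold_left_min_spec t h : In (fold_left Z.min t h) (h :: t) /\
  forall z, In z (h :: t) -> (fold_left Z.min t h <= z)%Z.
Proof.
  revert h; induction t as [|a t IH]; intros h; simpl.
  - split; [left; reflexivity | intros z [<-|[]]; lia].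
  - destruct (IH (Z.min h a)) as [Hin Hle]. split.
    + destruct Hin as [E|E]; [|right; right; exact E].
      rewrite <- E. destruct (Z.min_spec h a) as [[_ ->]|[_ ->]]; simpl; auto.
    + intros z [<-|[<-|Hz]]; [| |apply Hle; right; exact Hz];
        specialize (Hle (Z.min h a) (or_introl eq_refl)); lia.
Qed.

Lemma firstn_index_of_skipn a l :
  In a l -> l = firstn (index_of a l) l ++ a :: skipn (S (index_of a l)) l.
Proof.
  induction l as [|b l IH]; intros Hin; [destruct Hin|]. simpl.
  destruct (Z.eqb_spec a b) as [->|Hne]; [reflexivity|].
  destruct Hin as [->|Hin]; [congruence|]. simpl. f_equal. exact (IH Hin).
Qed.

Lemma NoDup_min_strict L m R :
  NoDup (L ++ m :: R) -> (forall z, In z (L ++ m :: R) -> (m <= z)%Z) ->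
  (forall z, In z L -> (m < z)%Z) /\ (forall z, In z R -> (m < z)%Z).
Proof.
  intros Hnd Hle. apply NoDup_remove_2 in Hnd.
  split; intros z Hz; assert (z <> m) by (intros ->; apply Hnd, in_or_app; auto);
    assert (m <= z)%Z by (apply Hle, in_or_app; simpl; auto); lia.
Qed.

Lemma tree_psv_ct_fuel k x : NoDup x -> length x <= k -> tree_psv (ct_fuel k x) = psv x.
Proof.
  revert x; induction k as [|k IH]; intros x Hnd Hlen.
  - destruct x; [reflexivity | simpl in Hlen; lia].
  - destruct x as [|h t]; [reflexivity|].
    destruct (fold_left_min_spec t h) as [Hin Hle].
    set (m := fold_left Z.min t h) in *.
    set (L := firstn (index_of m (h :: t)) (h :: t)).
    set (R := skipn (S (index_of m (h :: t))) (h :: t)).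
    change (ct_fuel (S k) (h :: t)) with (Node (ct_fuel k L) (ct_fuel k R)).
    assert (Hx : h :: t = L ++ m :: R) by exact (firstn_index_of_skipn m _ Hin).
    rewrite Hx in Hnd, Hle, Hlen |- *.
    destruct (NoDup_min_strict L m R Hnd Hle) as [HL HR].
    rewrite length_app in Hlen. simpl in Hlen.
    assert (EL : tree_psv (ct_fuel k L) = psv L)
      by (apply IH; [exact (NoDup_app_remove_r _ _ Hnd) | lia]).
    assert (ER : tree_psv (ct_fuel k R) = psv R).
    { apply IH; [|lia]. apply NoDup_app_remove_l in Hnd. now inversion Hnd. }
    assert (Hsize : bsize (ct_fuel k L) = length L)
      by now rewrite <- tree_psv_length, EL, psv_length.
    simpl. rewrite EL, ER, Hsize. symmetry. exact (psv_app_min L m R HL HR).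
Qed.

Lemma tree_psv_cartesian x : NoDup x -> tree_psv (cartesian x) = psv x.
Proof. intros Hnd. apply tree_psv_ct_fuel; auto. Qed.

Lemma lift_link_inj a : Injective (lift_link a).
Proof. intros [p|] [q|] E; inversion E; f_equal; lia. Qed.

Lemma map_inj {A B} (f : A -> B) : Injective f -> Injective (map f).
Proof.
  intros Hf l1; induction l1 as [|a l1 IH]; intros [|b l2] E; try discriminate; auto.
  injection E as Eab El. f_equal; auto.
Qed.

Lemma tree_psv_inj : Injective tree_psv.
Proof.
  intros t1; induction t1 as [|l1 IHl r1 IHr]; intros [|l2 r2] E; simpl in E;
    try reflexivity; try (symmetry in E; apply app_cons_not_nil in E; contradiction);
    try (apply app_cons_not_nil in E; contradiction).
  assert (Hnone : forall a t, ~ In None (map (lift_link a) (tree_psv t))).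
  { intros a t Hin. apply in_map_iff in Hin as [[q|] [Hq _]]; discriminate. }
  apply app_inj_pivot in E as [[[_ Hin] | [Hin _]] | [El Er]];
    [exfalso; eapply Hnone; exact Hin .. |].
  apply IHl in El. subst l2. apply map_inj, IHr in Er; [|apply lift_link_inj].
  congruence.
Qed.

Definition swap_fun (f : nat -> Z) (j q : nat) : Z :=
  if q =? j then f (S j) else if q =? S j then f j else f q.

Lemma swap_fun_j f j : swap_fun f j j = f (S j).
Proof. unfold swap_fun. rewrite Nat.eqb_refl. reflexivity. Qed.

Lemma swap_fun_Sj f j : swap_fun f j (S j) = f j.
Proof.
  unfold swap_fun. destruct (Nat.eqb_spec (S j) j); [lia|].
  rewrite Nat.eqb_refl. reflexivity.
Qed.

Lemma swap_fun_other f j q : q <> j -> q <> S j -> swap_fun f j q = f q.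
Proof.
  intros. unfold swap_fun.
  destruct (Nat.eqb_spec q j), (Nat.eqb_spec q (S j)); congruence.
Qed.

Lemma skipn_entry x i : i < length x -> skipn i x = entry x i :: skipn (S i) x.
Proof.
  revert i; induction x as [|a x IH]; intros i Hi; simpl in Hi; [lia|].
  destruct i; [reflexivity|]. apply IH. lia.
Qed.

Lemma tau_split x j : S j < length x ->
  x = firstn j x ++ entry x j :: entry x (S j) :: skipn (S (S j)) x /\
  tau x (S j) = firstn j x ++ entry x (S j) :: entry x j :: skipn (S (S j)) x.
Proof.
  intros Hj. split.
  - rewrite <- (firstn_skipn j x) at 1.
    rewrite (skipn_entry x j), (skipn_entry x (S j)) by lia. reflexivity.
  - unfold tau. replace (S j - 1) with j by lia. rewrite Nat.add_1_r. reflexivity.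
Qed.

Lemma tau_perm x j : S j < length x -> Permutation x (tau x (S j)).
Proof.
  intros Hj. destruct (tau_split x j Hj) as [Ex Et].
  rewrite Et. rewrite Ex at 1. apply Permutation_app_head, perm_swap.
Qed.

Lemma tau_length x j : S j < length x -> length (tau x (S j)) = length x.
Proof. intros Hj. symmetry. apply Permutation_length, tau_perm, Hj. Qed.

Lemma tau_NoDup x j : S j < length x -> NoDup x -> NoDup (tau x (S j)).
Proof. intros Hj. apply Permutation_NoDup, tau_perm, Hj. Qed.

Lemma nth_app_swap {A} (l r : list A) a b q d : q <> length l -> q <> S (length l) ->
  nth q (l ++ b :: a :: r) d = nth q (l ++ a :: b :: r) d.
Proof.
  intros H1 H2. destruct (Nat.lt_ge_cases q (length l)).
  - rewrite !app_nth1 by lia. reflexivity.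
  - rewrite !app_nth2 by lia. destruct (q - length l) as [|[|k]] eqn:E; [lia | lia | reflexivity].
Qed.

Lemma entry_tau x j q : S j < length x -> entry (tau x (S j)) q = swap_fun (entry x) j q.
Proof.
  intros Hj. destruct (tau_split x j Hj) as [Ex Et].
  assert (HA : length (firstn j x) = j) by (apply firstn_length_le; lia).
  change (entry (tau x (S j)) q) with (nth q (tau x (S j)) 0%Z). rewrite Et.
  unfold swap_fun. destruct (Nat.eqb_spec q j) as [->|Hqj].
  - rewrite app_nth2, HA, Nat.sub_diag by lia. reflexivity.
  - destruct (Nat.eqb_spec q (S j)) as [->|HqSj].
    + rewrite app_nth2, HA by lia. replace (S j - j) with 1 by lia. reflexivity.
    + rewrite nth_app_swap, <- Ex by lia. reflexivity.
Qed.

Lemma tau_involutive x j : S j < length x -> tau (tau x (S j)) (S j) = x.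
Proof.
  intros Hj. assert (Hj' : S j < length (tau x (S j))) by (rewrite tau_length; exact Hj).
  apply (nth_ext _ _ 0%Z 0%Z); [rewrite !tau_length; lia|].
  intros q _. change (entry (tau (tau x (S j)) (S j)) q = entry x q).
  rewrite entry_tau by exact Hj'.
  destruct (Nat.eq_dec q j) as [->|Hqj].
  { rewrite swap_fun_j, entry_tau, swap_fun_Sj by lia. reflexivity. }
  destruct (Nat.eq_dec q (S j)) as [->|HqSj].
  { rewrite swap_fun_Sj, entry_tau, swap_fun_j by lia. reflexivity. }
  rewrite swap_fun_other, entry_tau, swap_fun_other by lia. reflexivity.
Qed.

Lemma tau_valid n x i : valid_seq n x -> 1 <= i <= n - 1 -> valid_seq n (tau x i).
Proof.
  intros [Hlen Hnd] Hi. destruct i as [|j]; [lia|].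
  split; [rewrite tau_length; lia | apply tau_NoDup; [lia | exact Hnd]].
Qed.

Lemma psv_tau x j : S j < length x ->
  psv (tau x (S j)) = map (psv_at (swap_fun (entry x) j)) (seq 0 (length x)).
Proof.
  intros Hj. unfold psv. rewrite tau_length by exact Hj.
  apply map_ext. intros k. apply psv_at_ext. intros q _. apply entry_tau, Hj.
Qed.

(** How a link into [j] or [S j] is redirected once [f j] and [f (S j)] are exchanged;
    [lt] tells whether the old [f j] lies below the value at the linking position. *)
Definition swap_link (j : nat) (lt : bool) (o : option nat) : option nat :=
  match o with
  | Some q =>
      if q =? j then Some (S j)
      else if q =? S j then (if lt then Some (S j) else Some j)
      else Some q
  | None => None
  end.

Lemma swap_link_below j lt o : (forall q, o = Some q -> q < j) -> swap_link j lt o = o.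
Proof.
  intros H. destruct o as [q|]; simpl; [|reflexivity].
  specialize (H q eq_refl).
  destruct (Nat.eqb_spec q j), (Nat.eqb_spec q (S j)); reflexivity || lia.
Qed.

Lemma swap_link_ext j lt1 lt2 o :
  (o = Some (S j) -> lt1 = lt2) -> swap_link j lt1 o = swap_link j lt2 o.
Proof.
  intros H. destruct o as [q|]; simpl; [|reflexivity].
  destruct (Nat.eqb_spec q j); [reflexivity|].
  destruct (Nat.eqb_spec q (S j)) as [->|]; [rewrite H|]; reflexivity.
Qed.

Lemma first_true (P : nat -> bool) n : exists th, th <= n /\
  (forall k, k < th -> P k = false) /\ (th < n -> P th = true).
Proof.
  induction n as [|n (th & Hth & Hbefore & Hat)].
  - exists 0. repeat split; intros; lia.
  - destruct (Nat.eq_dec th n) as [->|Hne]; [destruct (P n) eqn:Pn|].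
    + exists n. repeat split; auto.
    + exists (S n). repeat split; [lia | |lia].
      intros k Hk. destruct (Nat.eq_dec k n) as [->|]; [exact Pn | apply Hbefore; lia].
    + exists th. repeat split; auto; intros; apply Hat; lia.
Qed.

Section AdjacentSwap.

Variables (f : nat -> Z) (j : nat).

Lemma psv_at_swap_below k : k < j -> psv_at (swap_fun f j) k = psv_at f k.
Proof. intros Hk. apply psv_at_ext. intros; apply swap_fun_other; lia. Qed.

Lemma psv_at_swap_at : psv_at (swap_fun f j) j = prev_smaller f (f (S j)) j.
Proof.
  unfold psv_at. rewrite swap_fun_j.
  apply prev_smaller_ext. intros; apply swap_fun_other; lia.
Qed.

Lemma psv_at_swap_next : f j <> f (S j) ->
  psv_at (swap_fun f j) (S j) = if (f j <? f (S j))%Z then psv_at f j else Some j.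
Proof.
  intros Hab. unfold psv_at. rewrite swap_fun_Sj. cbn [prev_smaller].
  rewrite swap_fun_j, (prev_smaller_ext (swap_fun f j) f)
    by (intros; apply swap_fun_other; lia).
  destruct (Z.ltb_spec (f (S j)) (f j)), (Z.ltb_spec (f j) (f (S j)));
    reflexivity || lia.
Qed.

Lemma psv_at_swap_above k : S j < k -> f j <> f k -> f (S j) <> f k ->
  psv_at (swap_fun f j) k = swap_link j (f j <? f k)%Z (psv_at f k).
Proof.
  intros Hk Ha Hb. destruct (Nat.le_exists_sub (S (S j)) k) as [r [Hr _]]; [lia|].
  rewrite Nat.add_comm in Hr. subst k. unfold psv_at. rewrite swap_fun_other by lia.
  set (v := f (S (S j) + r)) in *. rewrite !prev_smaller_add.
  rewrite (prev_smaller_ext (fun q => swap_fun f j (S (S j) + q)) (fun q => f (S (S j) + q)))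
    by (intros; apply swap_fun_other; lia).
  destruct (prev_smaller (fun q => f (S (S j) + q)) v r) as [q|].
  { cbn [swap_link]. destruct (Nat.eqb_spec (S (S j) + q) j); [lia|].
    destruct (Nat.eqb_spec (S (S j) + q) (S j)); [lia | reflexivity]. }
  cbn [prev_smaller]. rewrite swap_fun_Sj, swap_fun_j.
  rewrite (prev_smaller_ext (swap_fun f j) f) by (intros; apply swap_fun_other; lia).
  assert (Ej : (j =? j) = true) by apply Nat.eqb_refl.
  assert (ESj : (S j =? S j) = true) by apply Nat.eqb_refl.
  assert (ESjj : (S j =? j) = false) by (apply Nat.eqb_neq; lia).
  destruct (Z.ltb_spec (f j) v), (Z.ltb_spec (f (S j)) v);
    cbn [swap_link]; rewrite ?Ej, ?ESj, ?ESjj; try reflexivity.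
  symmetry. apply swap_link_below. intros q Hq. apply prev_smaller_Some in Hq. lia.
Qed.

(** Positions linked to [S j] carry decreasing values, so those whose value
    exceeds [f j] form an initial segment, ending at a threshold [th]. *)
Lemma swap_threshold n :
  (forall q1 q2, q1 < n -> q2 < n -> f q1 = f q2 -> q1 = q2) ->
  exists th, th <= n /\
    forall k, k < n -> psv_at f k = Some (S j) -> (f j <? f k)%Z = (k <? th).
Proof.
  intros Hinj.
  destruct (first_true (fun k => match psv_at f k with
                                 | Some q => andb (q =? S j) (f k <? f j)%Z
                                 | None => false end) n) as (th & Hth & Hbefore & Hat).
  exists th. split; [exact Hth|]. intros k Hk Hpk.
  destruct (prev_smaller_Some _ _ _ _ Hpk) as (Hjk & _ & Hbetween).
  destruct (Nat.ltb_spec k th) as [Hlt|Hge].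
  - specialize (Hbefore k Hlt). simpl in Hbefore.
    rewrite Hpk, Nat.eqb_refl in Hbefore. apply Z.ltb_ge in Hbefore.
    assert (f j <> f k) by (intros E; apply Hinj in E; lia).
    apply Z.ltb_lt. lia.
  - specialize (Hat ltac:(lia)). simpl in Hat.
    destruct (psv_at f th) as [q|] eqn:Eth; [|discriminate].
    apply andb_prop in Hat as [Hq Hlt]. apply Nat.eqb_eq in Hq. subst q.
    apply Z.ltb_lt in Hlt. apply Z.ltb_ge.
    destruct (Nat.eq_dec th k) as [->|]; [lia|].
    apply prev_smaller_Some in Eth. specialize (Hbetween th). lia.
Qed.

End AdjacentSwap.

Definition swap_psv_entry (p : list (option nat)) (j : nat) (c d : option nat) (th k : nat)
    : option nat :=
  if k <? j then nth k p None
  else if k =? j then c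
  else if k =? S j then d
  else swap_link j (k <? th) (nth k p None).

Definition swap_psv (n : nat) (p : list (option nat)) (j : nat) (c d : option nat) (th : nat)
    : list (option nat) :=
  map (swap_psv_entry p j c d th) (seq 0 n).

Lemma psv_tau_swap_psv x j : NoDup x -> S j < length x ->
  exists c d th, In c (options (length x)) /\ In d (options (length x)) /\ th <= length x /\
    psv (tau x (S j)) = swap_psv (length x) (psv x) j c d th.
Proof.
  intros Hnd Hj. set (n := length x) in *. set (f := entry x).
  assert (Hinj : forall q1 q2, q1 < n -> q2 < n -> f q1 = f q2 -> q1 = q2)
    by (intros; eapply NoDup_nth; eauto).
  destruct (swap_threshold f j n Hinj) as (th & Hth & Hthreshold).
  exists (prev_smaller f (f (S j)) j),
    (if (f j <? f (S j))%Z then psv_at f j else Some j), th.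
  split; [apply prev_smaller_in_options; lia|].
  split.
  { destruct (f j <? f (S j))%Z; [apply prev_smaller_in_options; lia|].
    right. apply in_map, in_seq. lia. }
  split; [exact Hth|].
  rewrite psv_tau by exact Hj. apply map_ext_in. intros k Hk. apply in_seq in Hk.
  unfold swap_psv_entry. rewrite nth_psv by lia. fold f.
  destruct (Nat.ltb_spec k j); [apply psv_at_swap_below; lia|].
  destruct (Nat.eqb_spec k j) as [->|]; [apply psv_at_swap_at|].
  destruct (Nat.eqb_spec k (S j)) as [->|].
  { apply psv_at_swap_next. intros E. apply Hinj in E; lia. }
  rewrite psv_at_swap_above by (lia || (intros E; apply Hinj in E; lia)).
  apply swap_link_ext. intros Hpk. apply Hthreshold; [lia | exact Hpk].
Qed.

Definition swap_candidates (n : nat) (p : list (option nat)) : list (list (option nat)) :=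
  map (fun '(j, c, d, th) => swap_psv n p j c d th)
    (list_prod (list_prod (list_prod (seq 0 (n - 1)) (options n)) (options n)) (seq 0 (S n))).

Lemma swap_candidates_length n p :
  length (swap_candidates n p) = (n - 1) * S n * S n * S n.
Proof.
  unfold swap_candidates, options.
  rewrite length_map, !length_prod. simpl. rewrite length_map, !length_seq. reflexivity.
Qed.

Lemma psv_tau_in_candidates n x i : valid_seq n x -> 1 <= i <= n - 1 ->
  In (psv (tau x i)) (swap_candidates n (psv x)).
Proof.
  intros [<- Hnd] Hi. destruct i as [|j]; [lia|].
  destruct (psv_tau_swap_psv x j Hnd ltac:(lia)) as (c & d & th & Hc & Hd & Hth & ->).
  apply in_map_iff. exists (j, c, d, th). split; [reflexivity|].
  rewrite !in_prod_iff, !in_seq. repeat split; auto; lia.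
Qed.

Lemma swap_edge_in_candidates n t1 t2 :
  swap_edge n t1 t2 -> In (tree_psv t2) (swap_candidates n (tree_psv t1)).
Proof.
  intros [Hne (x & y & Hx & Hy & <- & <- & Hswap)].
  destruct Hswap as [Heq | (i & Hi & [Hxy | Hyx])]; [contradiction| |].
  - unfold ct_equiv in Hxy. rewrite <- Hxy.
    assert (Hz := tau_valid n x i Hx Hi).
    rewrite !tree_psv_cartesian by (exact (proj2 Hx) || exact (proj2 Hz)).
    apply psv_tau_in_candidates; assumption.
  - unfold ct_equiv in Hyx. rewrite <- Hyx. destruct i as [|j]; [lia|].
    assert (Hz := tau_valid n y (S j) Hy Hi).
    rewrite !tree_psv_cartesian by (exact (proj2 Hy) || exact (proj2 Hz)).
    rewrite <- (tau_involutive y j) at 1 by (destruct Hy; lia).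
    apply psv_tau_in_candidates; assumption.
Qed.

Fixpoint ball (n d : nat) (p : list (option nat)) : list (list (option nat)) :=
  match d with
  | O => [p]
  | S d => p :: flat_map (ball n d) (swap_candidates n p)
  end.

Lemma walk_in_ball n m t1 t2 :
  walk n m t1 t2 -> forall d, m <= d -> In (tree_psv t2) (ball n d (tree_psv t1)).
Proof.
  induction 1 as [t|m t1 t2 t3 Hedge Hwalk IH]; intros [|d] Hd; simpl; auto; [lia|].
  right. apply in_flat_map. exists (tree_psv t2).
  split; [apply swap_edge_in_candidates, Hedge | apply IH; lia].
Qed.

Lemma length_flat_map_le {A B} (f : A -> list B) l c :
  (forall a, length (f a) <= c) -> length (flat_map f l) <= length l * c.
Proof.
  intros H. induction l as [|a l IH]; simpl; [lia|].
  rewrite length_app. specialize (H a). lia.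
Qed.

Lemma ball_length n d p : length (ball n d p) <= S n ^ (4 * d).
Proof.
  revert p; induction d as [|d IH]; intros p; cbn [ball length]; [simpl; lia|].
  pose proof (length_flat_map_le (ball n d) (swap_candidates n p) _ IH) as Hflat.
  rewrite swap_candidates_length in Hflat.
  replace (4 * S d) with (4 + 4 * d) by lia. rewrite Nat.pow_add_r.
  assert (Hdegree : (n - 1) * S n * S n * S n + 1 <= S n ^ 4)
    by (destruct n; simpl; nia).
  assert (0 < S n ^ (4 * d)) by (apply Nat.neq_0_lt_0, Nat.pow_nonzero; lia).
  pose proof (Nat.mul_le_mono_r _ _ (S n ^ (4 * d)) Hdegree). nia.
Qed.

Fixpoint path_trees (k : nat) : list btree :=
  match k with
  | O => [Node Leaf Leaf]
  | S k => map (fun t => Node t Leaf) (path_trees k) ++ map (Node Leaf) (path_trees k)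
  end.

Lemma path_trees_bsize k t : In t (path_trees k) -> bsize t = S k.
Proof.
  revert t; induction k as [|k IH]; simpl; intros t Ht.
  - destruct Ht as [<-|[]]. reflexivity.
  - apply in_app_or in Ht as [Ht|Ht]; apply in_map_iff in Ht as [t' [<- Ht']];
      simpl; rewrite (IH t' Ht'); lia.
Qed.

Lemma path_trees_length k : length (path_trees k) = 2 ^ k.
Proof.
  induction k as [|k IH]; simpl; [reflexivity|].
  rewrite length_app, !length_map. lia.
Qed.

Lemma path_trees_NoDup k : NoDup (path_trees k).
Proof.
  induction k as [|k IH]; simpl.
  - repeat constructor. intros [].
  - apply NoDup_app; try (apply Injective_map_NoDup; [intros a b E; congruence | exact IH]).
    intros t Hl Hr. apply in_map_iff in Hl as [t1 [<- Ht1]].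
    apply in_map_iff in Hr as [t2 [E _]]. injection E as <- _.
    apply path_trees_bsize in Ht1. discriminate.
Qed.

Lemma exists_not_in {A} (l l' : list A) :
  NoDup l -> length l' < length l -> exists a, In a l /\ ~ In a l'.
Proof.
  intros Hnd Hlt. apply NNPP. intros Hnone.
  apply (proj1 (Nat.lt_nge _ _) Hlt), (NoDup_incl_length Hnd).
  intros a Ha. apply NNPP. intros Hout. apply Hnone. exists a. auto.
Qed.

Lemma diam_ge_of_ball_bound n d : 1 <= n -> S n ^ (4 * d) < 2 ^ (n - 1) -> diam_ge n (INR (S d)).
Proof.
  intros Hn Hsmall.
  destruct (path_trees (n - 1)) as [|t1 ts] eqn:Ep.
  { pose proof (path_trees_length (n - 1)) as Hlen. rewrite Ep in Hlen.
    pose proof (Nat.pow_nonzero 2 (n - 1)). simpl in Hlen. lia. }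
  assert (Ht1 : In t1 (path_trees (n - 1))) by (rewrite Ep; left; reflexivity).
  destruct (exists_not_in (map tree_psv (path_trees (n - 1))) (ball n d (tree_psv t1)))
    as [p [Hp Hfar]].
  - apply Injective_map_NoDup; [apply tree_psv_inj | apply path_trees_NoDup].
  - rewrite length_map, path_trees_length. pose proof (ball_length n d (tree_psv t1)). lia.
  - apply in_map_iff in Hp as [t2 [<- Ht2]].
    exists t1, t2. rewrite (path_trees_bsize _ _ Ht1), (path_trees_bsize _ _ Ht2).
    split; [lia|]. split; [lia|].
    intros m Hwalk. apply le_INR.
    destruct (Nat.le_gt_cases m d) as [Hle|Hgt]; [|lia].
    exfalso. exact (Hfar (walk_in_ball n m t1 t2 Hwalk d Hle)).
Qed.

Lemma diam_ge_mono n k k' : (k' <= k)%R -> diam_ge n k -> diam_ge n k'.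
Proof.
  intros Hk (t1 & t2 & H1 & H2 & Hfar). exists t1, t2.
  repeat split; auto. intros m Hm. specialize (Hfar m Hm). lra.
Qed.

Lemma ball_bound_log_radius n : 2 <= n ->
  S n ^ (4 * (n / (12 * Nat.log2 n))) < 2 ^ (n - 1).
Proof.
  intros Hn. set (l := Nat.log2 n). set (d := n / (12 * l)).
  assert (Hl : 0 < l) by (apply Nat.log2_pos; lia).
  assert (Hsn : S n <= 2 ^ S l) by (apply Nat.log2_spec; lia).
  assert (Hd : 12 * l * d <= n) by apply Nat.Div0.mul_div_le.
  apply Nat.le_lt_trans with (2 ^ (S l * (4 * d))).
  - rewrite (Nat.pow_mul_r 2). apply Nat.pow_le_mono_l, Hsn.
  - apply Nat.pow_lt_mono_r; [lia|]. nia.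
Qed.

Lemma half_log2_le_ln n : 1 <= n -> (INR (Nat.log2 n) / 2 <= ln (INR n))%R.
Proof.
  intros Hn. set (l := Nat.log2 n).
  assert (Hpow : 2 ^ l <= n) by (apply Nat.log2_spec; lia).
  assert (Hln : (ln (INR (2 ^ l)) <= ln (INR n))%R).
  { destruct (proj1 (Nat.lt_eq_cases _ _) Hpow) as [Hlt | ->]; [|lra].
    apply Rlt_le, ln_increasing; [apply lt_0_INR, Nat.neq_0_lt_0, Nat.pow_nonzero; lia|].
    apply lt_INR, Hlt. }
  rewrite pow_INR, ln_pow in Hln by (simpl; lra).
  replace (INR 2) with 2%R in Hln by (simpl; lra).
  pose proof ln_lt_2. pose proof (pos_INR l). nra.
Qed.

Lemma ratio_le_log_radius n : 2 <= n ->
  (/ 24 * (INR n / ln (INR n)) <= INR (S (n / (12 * Nat.log2 n))))%R.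
Proof.
  intros Hn. set (l := Nat.log2 n). set (d := n / (12 * l)).
  assert (Hl : 0 < l) by (apply Nat.log2_pos; lia).
  assert (Hnd : n < 12 * l * S d) by (apply Nat.mul_succ_div_gt; lia).
  apply lt_INR in Hnd. rewrite !mult_INR in Hnd.
  pose proof (half_log2_le_ln n ltac:(lia)) as Hln. fold l in Hln.
  apply lt_INR in Hl. simpl in Hl.
  set (L := ln (INR n)) in *. set (D := INR (S d)) in *.
  assert (HD : (0 < D)%R) by apply lt_0_INR, Nat.lt_0_succ.
  apply (Rmult_le_reg_r (24 * L)); [lra|].
  replace (/ 24 * (INR n / L) * (24 * L))%R with (INR n) by (field; lra).
  replace (INR 12) with 12%R in Hnd by (simpl; lra).
  nra.
Qed.

Theorem lemma11 :
  exists c : R, (0 < c)%R /\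
  exists N : nat, forall n : nat, (N <= n)%nat ->
    diam_ge n (c * (INR n / ln (INR n)))%R.
Proof.
  exists (/ 24)%R. split; [lra|]. exists 2. intros n Hn.
  apply diam_ge_mono with (INR (S (n / (12 * Nat.log2 n)))).
  - apply ratio_le_log_radius, Hn.
  - apply diam_ge_of_ball_bound; [lia|]. apply ball_bound_log_radius, Hn.
Qed.
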